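(* Let $\omega_a,\omega_c,\kappa,\lambda>0$ and $N>0$, and assume $4\lambda^2\neq\omega_a\omega_c\big(1+\kappa^2/\omega_c^2\big)$. Define the real $4\times4$ matrices $$A=\begin{pmatrix}-\kappa&\omega_c&0&0\\-\omega_c&-\kappa&-2\sqrt2\,\lambda&0\\0&0&0&-\omega_a\\ \sqrt2\,\lambda&0&\omega_a&0\end{pmatrix},\qquad D=\frac{\kappa}{N}\begin{pmatrix}1&0&0&0\\0&1&0&0\\0&0&0&0\\0&0&0&0\end{pmatrix}.$$ Then every real symmetric $4\times 4$ matrix $V$ satisfying the Lyapunov equation $AV+VA^{T}=-D$ satisfies $$\frac12\big(V_{11}+V_{22}\big)-\frac{1}{2N}=\frac{1}{2N}\,\frac{\lambda^2}{\omega_a\omega_c-\dfrac{4\lambda^2}{1+\kappa^2/\omega_c^2}}.$$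
   Context: $A$ is the linearization of the mean-field dynamics of the dissipative Kerr quantum Rabi model around the normal phase in the variables $(\delta Q,\delta P,\delta X,\delta Y)$, $D$ is the vacuum-noise diffusion matrix acting on the cavity quadratures, and $V$ is the steady-state covariance matrix; the quantity $\frac12(V_{11}+V_{22})-\frac1{2N}$ is the normal-phase photon-number fluctuation $\langle\delta\alpha^\dagger\delta\alpha\rangle$. *)

From mathcomp Require Import all_boot all_order all_algebra.
Set Implicit Arguments. Unset Strict Implicit. Unset Printing Implicit Defensive.
Import Order.TTheory GRing.Theory Num.Theory.
Local Open Scope ring_scope.

(* Drift matrix A of the linearized Kerr quantum Rabi model (variables dQ,dP,dX,dY),
   indices 0..3 correspond to the paper's 1..4. *)
Definition driftA (R : rcfType) (wa wc k l : R) : 'M[R]_4 :=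
  \matrix_(i < 4, j < 4)
    nth 0 (nth [::] [:: [:: - k ; wc ; 0 ; 0 ];
        [:: - wc ; - k ; - (2 * Num.sqrt 2 * l) ; 0 ];
        [:: 0 ; 0 ; 0 ; - wa ];
        [:: Num.sqrt 2 * l ; 0 ; wa ; 0 ] ] i) j.

Definition diffD (R : rcfType) (k N : R) : 'M[R]_4 :=
  \matrix_(i < 4, j < 4) (if (i == j) && (i < 2)%N then k / N else 0).

From mathcomp Require Import all_boot all_order all_algebra.
From mathcomp Require Import ring lra.
Import Order.TTheory GRing.Theory Num.Theory.

Set Implicit Arguments.
Unset Strict Implicit.
Unset Printing Implicit Defensive.

Local Open Scope ring_scope.

(* The (2,2) and (3,3) equations force V23 = V03 = 0.
   The diagonal cavity equations then give V00 + V11 in terms of the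
   cavity-atom correlation V02, and two balance equations obtained by
   eliminating V01, V12 and V13 determine V02; its coefficient
   wa (wc^2 + k^2) - 4 l^2 wc vanishes exactly at the critical coupling. *)

Lemma big_ord4 (M : nmodType) (F : 'I_4 -> M) :
  \sum_(m < 4) F m = F (inord 0) + F (inord 1) + F (inord 2) + F (inord 3).
Proof.
rewrite !big_ord_recl big_ord0 addr0 !addrA.
by congr (F _ + F _ + F _ + F _); apply/val_inj; rewrite /= inordK.
Qed.

Lemma lyapunov_entry (R : comPzRingType) n (A V : 'M[R]_n) i j : V^T = V ->
  (A *m V + V *m A^T) i j = \sum_m (A i m * V m j + A j m * V m i).
Proof.
move=> Vsym; rewrite !mxE big_split; congr (_ + _); apply: eq_bigr => m _.
by rewrite !mxE -[in V i m]Vsym mxE mulrC.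
Qed.

Section NormalPhaseSteadyState.

Variables (R : rcfType) (wa wc k l N : R) (V : 'M[R]_4).
Hypothesis Vsym : V^T = V.
Hypothesis lyapV : driftA wa wc k l *m V + V *m (driftA wa wc k l)^T = - diffD k N.

Local Notation s := (Num.sqrt 2 * l).
Local Notation v p q := (V (inord p) (inord q)).

Lemma covC p q : v q p = v p q.
Proof. by rewrite -[in LHS]Vsym mxE. Qed.

Lemma lyapunov_inord p q : (p < 4)%N -> (q < 4)%N ->
  \sum_(m < 4) (driftA wa wc k l (inord p) m * V m (inord q)
              + driftA wa wc k l (inord q) m * V m (inord p))
  = - (if (p == q) && (p < 2)%N then k / N else 0).
Proof.
by move=> p4 q4; rewrite -lyapunov_entry // lyapV !mxE -val_eqE /= !inordK.
Qed.

Local Ltac solve_lyapunov_entry p q :=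
  move: (@lyapunov_inord p q isT isT);
  rewrite big_ord4 !mxE !inordK //=
    ?(covC 0 1) ?(covC 0 2) ?(covC 0 3) ?(covC 1 2) ?(covC 1 3) ?(covC 2 3);
  lra.

Lemma lyapunov00 : 2 * (wc * v 0 1 - k * v 0 0) = - (k / N).
Proof. solve_lyapunov_entry 0%N 0%N. Qed.

Lemma lyapunov11 : 2 * (wc * v 0 1 + k * v 1 1 + 2 * s * v 1 2) = k / N.
Proof. solve_lyapunov_entry 1%N 1%N. Qed.

Lemma lyapunov22 : wa * v 2 3 = 0.
Proof. solve_lyapunov_entry 2%N 2%N. Qed.

Lemma lyapunov33 : s * v 0 3 + wa * v 2 3 = 0.
Proof. solve_lyapunov_entry 3%N 3%N. Qed.

Lemma lyapunov01 : wc * v 1 1 - wc * v 0 0 - 2 * k * v 0 1 - 2 * s * v 0 2 = 0.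
Proof. solve_lyapunov_entry 0%N 1%N. Qed.

Lemma lyapunov02 : wc * v 1 2 - k * v 0 2 - wa * v 0 3 = 0.
Proof. solve_lyapunov_entry 0%N 2%N. Qed.

Lemma lyapunov03 : wc * v 1 3 - k * v 0 3 + s * v 0 0 + wa * v 0 2 = 0.
Proof. solve_lyapunov_entry 0%N 3%N. Qed.

Lemma lyapunov13 :
  s * v 0 1 + wa * v 1 2 - k * v 1 3 - wc * v 0 3 - 2 * s * v 2 3 = 0.
Proof. solve_lyapunov_entry 1%N 3%N. Qed.

Hypotheses (wa0 : wa != 0) (wc0 : wc != 0) (k0 : k != 0) (l0 : l != 0).

Lemma coupling_neq0 : s != 0.
Proof. by rewrite mulf_neq0 // sqrtr_eq0 -ltNge ltr0n. Qed.

Lemma sqr_coupling : s ^+ 2 = 2 * l ^+ 2.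
Proof. by rewrite exprMn sqr_sqrtr ?ler0n. Qed.

Lemma cov23_eq0 : v 2 3 = 0.
Proof. by move/eqP: lyapunov22; rewrite mulf_eq0 (negbTE wa0) => /eqP. Qed.

Lemma cov03_eq0 : v 0 3 = 0.
Proof.
move/eqP: lyapunov33.
by rewrite cov23_eq0 mulr0 addr0 mulf_eq0 (negbTE coupling_neq0) => /eqP.
Qed.

Lemma cavity_occupation : wc * (v 0 0 + v 1 1) = wc / N - 2 * s * v 0 2.
Proof.
apply: (mulfI k0).
have := congr1 ( *%R wc) lyapunov00; have := congr1 ( *%R wc) lyapunov11.
have := congr1 ( *%R (2 * s)) lyapunov02; rewrite cov03_eq0 /=; lra.
Qed.

Lemma coupling_balance : 4 * (s * v 0 0 + wa * v 0 2) = s / N.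
Proof.
apply: (mulfI k0).
have := congr1 ( *%R wc) lyapunov13; have := congr1 ( *%R k) lyapunov03.
have := congr1 ( *%R s) lyapunov00; have := congr1 ( *%R wa) lyapunov02.
rewrite cov03_eq0 cov23_eq0 /=; lra.
Qed.

Lemma cavity_balance :
  2 * (wc ^+ 2 + k ^+ 2) * v 0 0 + 4 * s * wc * v 0 2 = (wc ^+ 2 + k ^+ 2) / N.
Proof.
apply: (mulfI k0).
have := congr1 ( *%R (wc * wc)) lyapunov11.
have := congr1 ( *%R (wc * wc)) lyapunov00; have := congr1 ( *%R (k * k)) lyapunov00.
have := congr1 ( *%R (k * wc)) lyapunov01; have := congr1 ( *%R (2 * s * wc)) lyapunov02.
rewrite cov03_eq0 /=; lra.
Qed.

Lemma cov02_eq : v 0 2 * (wa * (wc ^+ 2 + k ^+ 2) - 4 * l ^+ 2 * wc)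
  = - s * (wc ^+ 2 + k ^+ 2) / (4 * N).
Proof.
have := congr1 ( *%R (wc ^+ 2 + k ^+ 2)) coupling_balance.
have := congr1 ( *%R s) cavity_balance.
have := congr1 ( *%R (wc * v 0 2)) sqr_coupling.
rewrite /=; lra.
Qed.

Hypotheses (N0 : N != 0) (crit0 : wa * (wc ^+ 2 + k ^+ 2) - 4 * l ^+ 2 * wc != 0).

Lemma photon_number_fluctuation :
  (v 0 0 + v 1 1) / 2 - 1 / (2 * N)
  = l ^+ 2 * (wc ^+ 2 + k ^+ 2)
    / (2 * N * wc * (wa * (wc ^+ 2 + k ^+ 2) - 4 * l ^+ 2 * wc)).
Proof.
have -> : v 0 0 + v 1 1 = 1 / N - 2 * s * v 0 2 / wc.
  by apply: (mulfI wc0); rewrite cavity_occupation; field; rewrite wc0 N0.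
have -> : v 0 2 = - s * (wc ^+ 2 + k ^+ 2)
                  / (4 * N * (wa * (wc ^+ 2 + k ^+ 2) - 4 * l ^+ 2 * wc)).
  by apply: (mulIf crit0); rewrite cov02_eq; field; rewrite crit0 N0.
transitivity (s ^+ 2 * (wc ^+ 2 + k ^+ 2)
              / (4 * N * wc * (wa * (wc ^+ 2 + k ^+ 2) - 4 * l ^+ 2 * wc))).
  by field; rewrite wc0 N0 crit0.
by rewrite sqr_coupling; field; rewrite wc0 N0 crit0.
Qed.

End NormalPhaseSteadyState.

Theorem mainTheorem2 (R : rcfType) (wa wc k l N : R)
  (hwa : 0 < wa) (hwc : 0 < wc) (hk : 0 < k) (hl : 0 < l) (hN : 0 < N)
  (hcrit : 4 * l ^+ 2 != wa * wc * (1 + k ^+ 2 / wc ^+ 2))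
  (V : 'M[R]_4) (hsym : V^T = V)
  (hlyap : driftA wa wc k l *m V + V *m (driftA wa wc k l)^T = - diffD k N) :
  (V ord0 ord0 + V (inord 1) (inord 1)) / 2 - 1 / (2 * N)
  = 1 / (2 * N) * (l ^+ 2 / (wa * wc - 4 * l ^+ 2 / (1 + k ^+ 2 / wc ^+ 2))).
Proof.
have [wa0 wc0 k0 l0 N0] : [/\ wa != 0, wc != 0, k != 0, l != 0 & N != 0].
  by split; rewrite gt_eqF.
have W0 : wc ^+ 2 + k ^+ 2 != 0 by rewrite gt_eqF // addr_gt0 // exprn_gt0.
have crit0 : wa * (wc ^+ 2 + k ^+ 2) - 4 * l ^+ 2 * wc != 0.
  apply: contra hcrit; rewrite subr_eq0 => /eqP crit; apply/eqP.
  by rewrite -(mulfK wc0 (4 * l ^+ 2)) -crit; field.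
have -> : ord0 = inord 0 :> 'I_4 by apply/val_inj; rewrite /= inordK.
rewrite (photon_number_fluctuation hsym hlyap) //; field.
rewrite (_ : wa * wc * _ - _ = wc * (wa * (wc ^+ 2 + k ^+ 2) - 4 * l ^+ 2 * wc)).
  by rewrite mulf_eq0 negb_or wc0 W0 N0 crit0.
by ring.
Qed.
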